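(* Let $K$ and $K'$ be two non-degenerate CMIs, with $\mathrm{can}(\mathrm{pur}(K))=(C,\langle\mathbb I_K,\mathbb I_K,P_i,1\le i\le t\rangle)$ and $\mathrm{can}(\mathrm{pur}(K'))=(C',\langle\mathbb I_{K'},\mathbb I_{K'},P'_j,1\le j\le s\rangle)$. If $K$ implies $K'$, then $\mathbb I_{K'}\subseteq\mathbb I_K$.
   Context: Setting: $X_1,\dots,X_n$ jointly distributed discrete random variables with $H(X_i)<\infty$; distribution unspecified. $X_\alpha=(X_i,i\in\alpha)$, $X_\emptyset$ constant. A CMI is $K=(C,\langle Q_1,\dots,Q_k\rangle)$, $k\ge0$, $C\subseteq\{1,\dots,n\}$, $\langle\cdot\rangle$ an unordered multiset of subsets; valid (for a given distribution) if $\sum_iH(X_{Q_i}|X_C)-H(X_{Q_1},\dots,X_{Q_k}|X_C)=0$. Empty members may be deleted. Degenerate = valid for every distribution, written $(\cdot,\langle\ \rangle)$. ''$K$ implies $K'$'': for every joint distribution, if $K$ is valid then $K'$ is valid. $\mathrm{pur}(K)=(C,\langle Q_i\setminus C:Q_i\setminus C\ne\emptyset\rangle)$. For pure $K$: $\mathbb I_K$ = indices lying in at least two members of the collection if $k\ge2$, else $\emptyset$; $P_1,\dots,P_t$ the nonempty sets among $Q_i\setminus\mathbb I_K$; $\mathrm{can}(K)=(\cdot,\langle\ \rangle)$ if $k\le1$, $(C,\langle\mathbb I_K,\mathbb I_K\rangle)$ if $k\ge2,\mathbb I_K\ne\emptyset,t\le1$, $(C,\langle P_1..P_t\rangle)$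 if $k\ge2,\mathbb I_K=\emptyset$, $(C,\langle\mathbb I_K,\mathbb I_K,P_1..P_t\rangle)$ if $k\ge2,\mathbb I_K\ne\emptyset,t\ge2$. For a general CMI $K$, $\mathbb I_K$ is the repeated-index set of $\mathrm{pur}(K)$. General-form notation: copies of $\mathbb I_K$ omitted when empty, $t=0$ for the case $(C,\langle\mathbb I_K,\mathbb I_K\rangle)$. *)

From HB Require Import structures.
From mathcomp Require Import all_boot all_order all_algebra.
From mathcomp Require Import all_classical all_reals all_analysis.
From mathcomp Require Import Rstruct Rstruct_topology.
From Stdlib Require Import Rdefinitions.

Set Implicit Arguments.
Unset Strict Implicit.
Unset Printing Implicit Defensive.
Import Order.TTheory GRing.Theory Num.Theory.

Local Open Scope classical_set_scope.
Local Open Scope ring_scope.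

(* A joint distribution of n discrete random variables X_1..X_n (indices are
   'I_n).  Discrete alphabets are countable; since entropies depend only on the
   distribution up to relabelling of values, each X_i takes values in nat.
   A joint distribution is a probability mass function on value-tuples. *)
Definition vtuple (n : nat) := {ffun 'I_n -> nat}.

(* X_alpha: the value tuple restricted to alpha (coordinates outside alpha
   are set to 0), so X_emptyset is constant. *)
Definition restr n (alpha : {set 'I_n}) (x : vtuple n) : vtuple n :=
  [ffun i => if i \in alpha then x i else 0%N].

Definition marg n (p : vtuple n -> R) (alpha : {set 'I_n}) (v : vtuple n) : R :=
  fine (esum [set x | restr alpha x = v] (fun x => (p x)%:E)).

Definition entropyE n (p : vtuple n -> R) (alpha : {set 'I_n}) : \bar R :=
  esum [set: vtuple n] (fun v => (- (marg p alpha v * ln (marg p alpha v)))%:E).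

Definition entropy n (p : vtuple n -> R) (alpha : {set 'I_n}) : R :=
  fine (entropyE p alpha).

Definition is_dist n (p : vtuple n -> R) : Prop :=
  (forall x, 0 <= p x) /\
  esum [set: vtuple n] (fun x => (p x)%:E) = 1%E /\
  (forall i : 'I_n, (entropyE p [set i] < +oo)%E).

Definition centropy n (p : vtuple n -> R) (A C : {set 'I_n}) : R :=
  entropy p (A :|: C) - entropy p C.

(* A CMI (C, <Q_1,...,Q_k>): the multiset is represented by a sequence
   (validity is invariant under permutation). *)
Definition CMI (n : nat) := ({set 'I_n} * seq {set 'I_n})%type.

Definition valid n (p : vtuple n -> R) (K : CMI n) : Prop :=
  \sum_(Q <- K.2) centropy p Q K.1
  - centropy p (\bigcup_(Q <- K.2) Q) K.1 = 0.

Definition degenerate n (K : CMI n) : Prop :=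
  forall p : vtuple n -> R, is_dist p -> valid p K.

Definition cmi_implies n (K K' : CMI n) : Prop :=
  forall p : vtuple n -> R, is_dist p -> valid p K -> valid p K'.

Definition pur n (K : CMI n) : CMI n :=
  (K.1, [seq Q :\: K.1 | Q <- K.2 & Q :\: K.1 != finset.set0]).

Definition Ipure n (K : CMI n) : {set 'I_n} :=
  if (2 <= size K.2)%nat
  then finset (fun i : 'I_n => (2 <= count (fun Q : {set 'I_n} => i \in Q) K.2)%nat)
  else finset.set0.

Definition IK n (K : CMI n) : {set 'I_n} := Ipure (pur K).

(* can(K) for a pure K (given for reference; the theorem only uses it to name
   the components). *)
Definition can n (K : CMI n) : option (CMI n) :=
  let I := Ipure K in
  let Ps := [seq Q :\: I | Q <- K.2 & Q :\: I != finset.set0] in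
  if (size K.2 <= 1)%nat then None (* degenerate (.,< >) *)
  else if I == finset.set0 then Some (K.1, Ps)
  else if (size Ps <= 1)%nat then Some (K.1, [:: I; I])
  else Some (K.1, [:: I, I & Ps]).

(* Let X_i be a fair coin and every other variable constant.  Then H(X_alpha)
   is ln 2 or 0 according as i lies in alpha or not, so the CMI (C, <Q_j>) is
   valid exactly when i lies in at most one of the sets Q_j \ C, i.e. when i is
   not a repeated index of pur(K).  If K implies K', every i outside I_K
   therefore lies outside I_K'. *)
From mathcomp Require Import all_boot all_order all_algebra.
From mathcomp Require Import all_classical all_reals all_analysis.
From mathcomp Require Import Rstruct lra.
From Stdlib Require Import Rdefinitions.

Set Implicit Arguments.
Unset Strict Implicit.
Unset Printing Implicit Defensive.
Import Order.TTheory GRing.Theory Num.Theory.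

Local Open Scope classical_set_scope.
Local Open Scope ring_scope.

Lemma esum_finite_support (T : choiceType) (a : T -> \bar R) (s : seq T) :
  uniq s -> (forall x, (0 <= a x)%E) -> (forall x, x \notin s -> a x = 0%E) ->
  \esum_(x in [set: T]) a x = \sum_(x <- s) a x.
Proof.
move=> s_uniq a_ge0 a_out.
rewrite (esumID [set` s]) // setTI esum_fset // -fsbig_seq // esum1 ?adde0 //.
by move=> x [_ /= x_out]; apply: a_out; apply/negP.
Qed.

Lemma mem_bigcup_seq (T I : finType) (x : T) (s : seq I) (F : I -> {set T}) :
  (x \in (\bigcup_(j <- s) F j)%SET) = has (fun j => x \in F j) s.
Proof.
elim: s => [|j s IHs]; first by rewrite big_nil finset.in_set0.
by rewrite big_cons finset.in_setU IHs.
Qed.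

Lemma sumr_natmul_count (V : nmodType) (I : Type) (x : V) (s : seq I) (P : pred I) :
  \sum_(j <- s) x *+ P j = x *+ count P s.
Proof. by rewrite sumrMnr -sum1_count; congr (_ *+ _); rewrite [RHS]big_mkcond. Qed.

Lemma count_pur n (i : 'I_n) (K : CMI n) :
  count (fun Q : {set 'I_n} => i \in Q) (pur K).2 = count (fun Q => i \in Q :\: K.1) K.2.
Proof.
rewrite count_map count_filter; apply: eq_count => Q /=.
by case: (boolP (i \in Q :\: K.1)) => //= iQ; apply/finset.set0Pn; exists i.
Qed.

Lemma mem_IK n (i : 'I_n) (K : CMI n) :
  (i \in IK K) = (1 < count (fun Q => i \in Q :\: K.1) K.2)%nat.
Proof.
rewrite /IK /Ipure; case: ifP => [_|size_lt2]; first by rewrite finset.in_set count_pur.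
have := count_size (fun Q : {set 'I_n} => i \in Q) (pur K).2.
rewrite count_pur finset.in_set0 => count_le_size; apply/esym/negbTE.
by rewrite -leqNgt (leq_trans count_le_size) // leqNgt size_lt2.
Qed.

Lemma entropy_term_ge0 (x : R) : 0 <= x <= 1 -> 0 <= - (x * ln x).
Proof. by case/andP=> x_ge0 x_le1; rewrite -mulrN mulr_ge0 // oppr_ge0 ln_le0. Qed.

Section Coin.
Variables (n : nat) (i : 'I_n).

Definition vzero : vtuple n := [ffun=> 0%N].
Definition vunit : vtuple n := [ffun j => nat_of_bool (j == i)].
Definition coin_support : seq (vtuple n) := [:: vzero; vunit].
Definition coin (x : vtuple n) : R := if x \in coin_support then 2^-1 else 0.

Lemma vzero_neq_vunit : vzero != vunit.
Proof. by apply/eqP => /ffunP/(_ i); rewrite !ffunE eqxx. Qed.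

Lemma uniq_coin_support : uniq coin_support.
Proof. by rewrite /= inE vzero_neq_vunit. Qed.

Lemma restr_vzero alpha : restr alpha vzero = vzero.
Proof. by apply/ffunP => j; rewrite !ffunE; case: ifP. Qed.

Lemma restr_vunit alpha : restr alpha vunit = if i \in alpha then vunit else vzero.
Proof.
apply/ffunP => j; rewrite !ffunE.
case: (eqVneq j i) => [->|ji]; first by case: ifP; rewrite ffunE ?eqxx.
by do 2 case: ifP => _; rewrite ffunE ?(negbTE ji).
Qed.

Lemma coinE x : coin x = ((x == vzero) + (x == vunit))%:R / 2.
Proof.
rewrite /coin !inE; case: (eqVneq x vzero) => [->|_].
  by rewrite (negbTE vzero_neq_vunit) /=; lra.
by case: (x == vunit) => /=; lra.
Qed.

Lemma coin_vzero : coin vzero = 2^-1.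
Proof. by rewrite /coin mem_head. Qed.

Lemma coin_vunit : coin vunit = 2^-1.
Proof. by rewrite /coin !inE eqxx orbT. Qed.

Lemma coin_ge0 x : 0 <= coin x.
Proof. by rewrite /coin; case: ifP => _; lra. Qed.

Lemma coin_out x : x \notin coin_support -> coin x = 0.
Proof. by rewrite /coin => /negbTE ->. Qed.

Lemma marg_coin alpha v :
  marg coin alpha v = if i \in alpha then coin v else (v == vzero)%:R.
Proof.
have summand x : (if x \in [set x | restr alpha x = v] then (coin x)%:E else 0%E)
    = ((restr alpha x == v)%:R * coin x)%:E.
  case: (eqVneq (restr alpha x) v) => [e|ne]; first by rewrite mem_set //= mul1r.
  by rewrite memNset ?mul0r //; apply/eqP.
rewrite /marg esum_mkcond (esum_finite_support uniq_coin_support).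
- rewrite 2!big_cons big_nil !summand adde0 -EFinD /= restr_vzero restr_vunit.
  rewrite coin_vzero coin_vunit ![_ == v]eq_sym.
  by case: (i \in alpha); rewrite ?coinE; lra.
- by move=> x; rewrite summand lee_fin mulr_ge0 ?coin_ge0.
- by move=> x /coin_out; rewrite summand => ->; rewrite mulr0.
Qed.

Lemma marg_coin_bounds alpha v : 0 <= marg coin alpha v <= 1.
Proof.
rewrite marg_coin /coin.
by case: ifP => _; [case: ifP => _ | case: (v == vzero) => /=]; lra.
Qed.

Lemma marg_coin_out alpha v : v \notin coin_support -> marg coin alpha v = 0.
Proof.
move=> v_out; rewrite marg_coin coin_out //.
by move: v_out; rewrite /coin_support !inE negb_or => /andP[/negbTE -> _]; case: ifP.
Qed.

Lemma entropyE_coin alpha : entropyE coin alpha = (ln 2 *+ (i \in alpha))%:E.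
Proof.
rewrite /entropyE (esum_finite_support uniq_coin_support).
- rewrite 2!big_cons big_nil adde0 -EFinD !marg_coin coin_vzero coin_vunit.
  rewrite eqxx eq_sym (negbTE vzero_neq_vunit); case: (i \in alpha) => /=.
    by rewrite lnV ?posrE //; congr EFin; lra.
  by rewrite ln1 mul0r mulr0 oppr0 addr0.
- by move=> v; rewrite lee_fin entropy_term_ge0 ?marg_coin_bounds.
- by move=> v /(marg_coin_out alpha) ->; rewrite mul0r oppr0.
Qed.

Lemma centropy_coin A C : centropy coin A C = ln 2 *+ (i \in A :\: C).
Proof.
rewrite /centropy /entropy !entropyE_coin /= !inE.
by case: (i \in A); case: (i \in C); rewrite /= ?mulr0n ?mulr1n RminusE ?subrr ?subr0.
Qed.

Lemma is_dist_coin : is_dist coin.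
Proof.
split; [exact: coin_ge0 | split; last by move=> j; rewrite entropyE_coin ltry].
rewrite (esum_finite_support uniq_coin_support).
- by rewrite 2!big_cons big_nil adde0 -EFinD coin_vzero coin_vunit; congr EFin; lra.
- by move=> x; rewrite lee_fin coin_ge0.
- by move=> x /coin_out ->.
Qed.

Lemma valid_coinP (K : CMI n) : valid coin K <-> i \notin IK K.
Proof.
have mem_union : (i \in (\bigcup_(Q <- K.2) Q)%SET :\: K.1)
                 = has (fun Q => i \in Q :\: K.1) K.2.
  rewrite inE mem_bigcup_seq; case: (boolP (i \in K.1)) => iC /=.
    by apply/esym/hasPn => Q _; rewrite inE iC.
  by apply: eq_has => Q; rewrite inE iC.
rewrite /valid (eq_bigr _ (fun Q _ => centropy_coin Q K.1)) sumr_natmul_count.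
rewrite centropy_coin mem_union has_count mem_IK -leqNgt.
set c := count _ _.
have ln2_neq0 : ln 2 != 0 :> R by rewrite gt_eqF // ln_gt0 // ltr1n.
rewrite -mulrnBr; last by case: c.
split => [/eqP|]; first by rewrite mulrn_eq0 (negbTE ln2_neq0) orbF; case: c => [|[|c]].
by case: c => [|[|c]].
Qed.

End Coin.

Theorem mainTheorem7 (n : nat) (K K' : CMI n) :
  ~ degenerate K -> ~ degenerate K' -> cmi_implies K K' ->
  IK K' \subset IK K.
Proof.
move=> _ _ K_implies_K'; apply/fintype.subsetP => i; apply: contraLR.
move=> /(valid_coinP i) valid_K; apply/(valid_coinP i).
exact: K_implies_K' (is_dist_coin i) valid_K.
Qed.
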